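(* Let $u,v$ be uniform twins, or opposite twins, of an oriented graph $G^\sigma$. Then $sr(G^\sigma)=sr(G^\sigma-u)=sr(G^\sigma-v)$.
   Context: An oriented graph $G^\sigma$ is a simple graph $G$ together with an orientation of each edge. Its skew-adjacency matrix $S(G^\sigma)=(s_{ij})$ has $s_{ij}=1$ if there is an arc from $v_i$ to $v_j$, $s_{ij}=-1$ if there is an arc from $v_j$ to $v_i$, and $0$ otherwise; the skew-rank $sr(G^\sigma)$ is the rank of $S(G^\sigma)$. $G^\sigma-u$ is obtained by deleting $u$ and its incident edges. For a common neighbor $w$ of two nonadjacent vertices $u,v$: the edges among $u,v,w$ have uniform orientations if the arcs go from both $u$ and $v$ to $w$, or from $w$ to both $u$ and $v$; they have opposite orientations if one arc goes from $u$ (resp. $v$) to $w$ and the other from $w$ to $v$ (resp. $u$). Two nonadjacent vertices $u,v$ are uniform (resp. opposite) twins if $N(u)=N(v)$ and for every common neighbor $w$ the edges among $u,v,w$ have uniform (resp. opposite) orientations. *)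

From mathcomp Require Import all_boot all_order all_algebra.
Set Implicit Arguments. Unset Strict Implicit. Unset Printing Implicit Defensive.
Import GRing.Theory Num.Theory.
Local Open Scope ring_scope.

Definition oriented_graph (n : nat) (arc : rel 'I_n) : Prop :=
  (forall x, ~~ arc x x) /\ (forall x y, arc x y -> ~~ arc y x).

Definition adj (n : nat) (arc : rel 'I_n) : rel 'I_n :=
  fun x y => arc x y || arc y x.

Definition skew_mx (T : finType) (arc : rel T) : 'M[rat]_#|T| :=
  \matrix_(i, j) (if arc (enum_val i) (enum_val j) then 1
                  else if arc (enum_val j) (enum_val i) then -1 else 0).

Definition skew_rank (n : nat) (arc : rel 'I_n) : nat :=
  \rank (skew_mx arc).

Definition del_vertex (n : nat) (arc : rel 'I_n) (u : 'I_n)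
  : rel (sig (fun w : 'I_n => w != u)) :=
  fun x y => arc (proj1_sig x) (proj1_sig y).

Definition skew_rank_del (n : nat) (arc : rel 'I_n) (u : 'I_n) : nat :=
  \rank (skew_mx (@del_vertex n arc u)).

Definition twins_base (n : nat) (arc : rel 'I_n) (u v : 'I_n) : Prop :=
  u != v /\ ~~ adj arc u v /\ (forall w, adj arc u w = adj arc v w).

Definition uniform_twins (n : nat) (arc : rel 'I_n) (u v : 'I_n) : Prop :=
  twins_base arc u v /\
  forall w, adj arc u w -> adj arc v w ->
    (arc u w && arc v w) || (arc w u && arc w v).

Definition opposite_twins (n : nat) (arc : rel 'I_n) (u v : 'I_n) : Prop :=
  twins_base arc u v /\
  forall w, adj arc u w -> adj arc v w ->
    (arc u w && arc w v) || (arc v w && arc w u).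
Arguments del_vertex {n} arc u.

(* Twins u and v have proportional rows in the skew-adjacency matrix: the row
   of u is the row of v (uniform twins) or its negative (opposite twins), and by
   skew-symmetry the same holds for the columns.  Deleting a row and the
   matching column that are multiples of a kept row and column does not change
   the rank, so deleting u, or symmetrically v, preserves the skew-rank. *)
From mathcomp Require Import all_boot all_order all_algebra.
Set Implicit Arguments.
Unset Strict Implicit.
Unset Printing Implicit Defensive.
Import GRing.Theory.

Local Open Scope ring_scope.

Section DependentRowDeletion.

Variables (F : fieldType) (m r : nat) (f : 'I_r -> 'I_m) (p : 'I_m).
Hypothesis f_onto_but_p : forall i, i != p -> exists j, f j = i.

Lemma mxrank_rowsub_dep k (A : 'M[F]_(m, k)) j0 c :
  row p A = c *: row (f j0) A -> \rank (rowsub f A) = \rank A.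
Proof.
move=> rowp; apply/eqmx_rank/andP; split; first exact: rowsub_sub.
apply/row_subP => i; case: (eqVneq i p) => [->|/f_onto_but_p [j <-]].
  by rewrite rowp scalemx_sub // -row_rowsub row_sub.
by rewrite -row_rowsub row_sub.
Qed.

Lemma mxrank_mxsub_dep (A : 'M[F]_m) j0 c :
  (forall x, A p x = c * A (f j0) x) -> (forall x, A x p = c * A x (f j0)) ->
  \rank (mxsub f f A) = \rank A.
Proof.
move=> rowp colp.
have -> : mxsub f f A = (rowsub f (rowsub f A)^T)^T.
  by apply/matrixP => i j; rewrite !mxE.
rewrite mxrank_tr (mxrank_rowsub_dep (j0 := j0) (c := c)); last first.
  by apply/rowP => x; rewrite !mxE colp.
rewrite mxrank_tr (mxrank_rowsub_dep (j0 := j0) (c := c)) //.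
by apply/rowP => x; rewrite !mxE rowp.
Qed.

End DependentRowDeletion.

Section SkewEntries.

Variables (n : nat) (arc : rel 'I_n).
Hypothesis og : oriented_graph arc.

Definition skew_entry (x y : 'I_n) : rat :=
  if arc x y then 1 else if arc y x then -1 else 0.

Lemma skew_entryC x y : skew_entry y x = - skew_entry x y.
Proof.
rewrite /skew_entry; case: ifPn => [yx|_]; last first.
  by case: ifP => //; rewrite ?oppr0 ?opprK.
by rewrite (negbTE (og.2 _ _ yx)) opprK.
Qed.

Lemma skew_entry_nonadj x y : ~~ adj arc x y -> skew_entry x y = 0.
Proof. by case/norP => /negbTE xy /negbTE yx; rewrite /skew_entry xy yx. Qed.

Lemma skew_entry_arc x y : arc x y -> skew_entry x y = 1.
Proof. by rewrite /skew_entry => ->. Qed.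

Lemma skew_entry_arcV x y : arc y x -> skew_entry x y = -1.
Proof. by move=> yx; rewrite -[LHS]opprK -skew_entryC skew_entry_arc. Qed.

Lemma skew_rank_del_dep (p q : 'I_n) (c : rat) :
  p != q -> (forall w, skew_entry p w = c * skew_entry q w) ->
  skew_rank arc = skew_rank_del arc p.
Proof.
move=> neq_pq rowp.
have neq_qp : q != p by rewrite eq_sym.
pose h (i : 'I_#|{: {w : 'I_n | w != p}}|) : 'I_#|'I_n| :=
  enum_rank (proj1_sig (enum_val i)).
have skewE x y : skew_mx arc (enum_rank x) (enum_rank y) = skew_entry x y.
  by rewrite mxE !enum_rankK.
rewrite /skew_rank_del.
have -> : skew_mx (del_vertex arc p) = mxsub h h (skew_mx arc).
  by apply/matrixP => i j; rewrite !mxE /h /del_vertex !enum_rankK.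
rewrite /skew_rank (@mxrank_mxsub_dep _ _ _ h (enum_rank p) _ _
  (enum_rank (exist (fun w : 'I_n => w != p) q neq_qp)) c) //.
- move=> i; rewrite -(enum_valK i) (inj_eq enum_rank_inj) => neq_ip.
  exists (enum_rank (exist (fun w : 'I_n => w != p) _ neq_ip)).
  by rewrite /h !enum_rankK.
- by move=> x; rewrite -(enum_valK x) /h enum_rankK /= (skewE p) (skewE q).
- move=> x; rewrite -(enum_valK x) /h enum_rankK /= (skewE _ p) (skewE _ q).
  by rewrite (skew_entryC p) (skew_entryC q) rowp mulrN.
Qed.

Lemma uniform_twins_entry u v :
  uniform_twins arc u v -> forall w, skew_entry u w = skew_entry v w.
Proof.
move=> [[_ [_ same_nbr]] orient] w.
have [adj_uw|nadj_uw] := boolP (adj arc u w); last first.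
  by rewrite !skew_entry_nonadj // -same_nbr.
have adj_vw : adj arc v w by rewrite -same_nbr.
case/orP: (orient w adj_uw adj_vw) => /andP [uw vw].
  by rewrite (skew_entry_arc uw) (skew_entry_arc vw).
by rewrite (skew_entry_arcV uw) (skew_entry_arcV vw).
Qed.

Lemma opposite_twins_entry u v :
  opposite_twins arc u v -> forall w, skew_entry u w = - skew_entry v w.
Proof.
move=> [[_ [_ same_nbr]] orient] w.
have [adj_uw|nadj_uw] := boolP (adj arc u w); last first.
  by rewrite !skew_entry_nonadj ?oppr0 // -same_nbr.
have adj_vw : adj arc v w by rewrite -same_nbr.
case/orP: (orient w adj_uw adj_vw) => /andP [uw wv].
  by rewrite (skew_entry_arc uw) (skew_entry_arcV wv) opprK.
by rewrite (skew_entry_arcV wv) (skew_entry_arc uw).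
Qed.

End SkewEntries.

Section TwinSymmetry.

Variables (n : nat) (arc : rel 'I_n) (u v : 'I_n).

Lemma twins_base_sym : twins_base arc u v -> twins_base arc v u.
Proof.
move=> [neq_uv [nadj_uv same_nbr]]; split; first by rewrite eq_sym.
by split=> [|w]; rewrite ?same_nbr // /adj orbC.
Qed.

Lemma uniform_twins_sym : uniform_twins arc u v -> uniform_twins arc v u.
Proof.
move=> [/twins_base_sym base orient]; split=> // w vw uw.
by rewrite andbC [arc w v && _]andbC orient.
Qed.

Lemma opposite_twins_sym : opposite_twins arc u v -> opposite_twins arc v u.
Proof.
move=> [/twins_base_sym base orient]; split=> // w vw uw.
by rewrite orbC orient.
Qed.

End TwinSymmetry.

Theorem lemma2p7 (n : nat) (arc : rel 'I_n) (u v : 'I_n) :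
  oriented_graph arc ->
  uniform_twins arc u v \/ opposite_twins arc u v ->
  skew_rank arc = skew_rank_del arc u /\ skew_rank arc = skew_rank_del arc v.
Proof.
move=> og twins.
have del_twin x y : uniform_twins arc x y \/ opposite_twins arc x y ->
    skew_rank arc = skew_rank_del arc x.
  case=> xy; have neq_xy : x != y by case: xy => [[]].
    by apply: (skew_rank_del_dep og neq_xy (c := 1)) => w;
      rewrite mul1r (uniform_twins_entry og xy).
  by apply: (skew_rank_del_dep og neq_xy (c := -1)) => w;
    rewrite mulN1r (opposite_twins_entry og xy).
split; first exact: del_twin twins.
apply: (del_twin v u).
by case: twins => [/uniform_twins_sym|/opposite_twins_sym]; [left|right].
Qed.
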